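(* $F$ is bounded below (on $\{x\in\mathcal{X}:z\ge0\}$) and $r$ is bounded. $F$ and $r$ are Lipschitz continuous in $x$ with respect to $\|\cdot\|_{\mathcal{X}}$. Furthermore, $F$ and $r$ are Lipschitz continuous in $z$ with respect to $\|\cdot\|_{L^1(\Omega)}$.
   Context: Let $-\infty<t_0<t_E<\infty$, $\Omega=(t_0,t_E)$, points $t_1,\dots,t_M\in[t_0,t_E]$. $\mathcal{X}=(H^1(\Omega))^{n_y}\times(L^2(\Omega))^{n_z}$ with inner product $\sum_j\langle y_j,v_j\rangle_{H^1(\Omega)}+\sum_j\langle z_j,w_j\rangle_{L^2(\Omega)}$ and induced norm $\|\cdot\|_{\mathcal{X}}$; $x=(y,z)$. Given $f:\mathbb{R}^{n_y}\times\mathbb{R}^{n_y}\times\mathbb{R}^{n_z}\times\Omega\to\mathbb{R}$, $c:\mathbb{R}^{n_y}\times\mathbb{R}^{n_y}\times\mathbb{R}^{n_z}\times\Omega\to\mathbb{R}^{n_c}$, $b:(\mathbb{R}^{n_y})^M\to\mathbb{R}^{n_b}$, define $F(x)=\int_\Omega f(\dot y(t),y(t),z(t),t)dt$ and $r(x)=\int_\Omega\|c(\dot y(t),y(t),z(t),t)\|_2^2dt+\|b(y(t_1),\dots,y(t_M))\|_2^2$. Assumptions: (A.2) $\|c(\dot y(t),y(t),z(t),t)\|_1$ and $\|b(y(t_1),\dots,y(t_M))\|_1$ are bounded for all $x\in\mathcal{X}$ with $z\ge0$ and all $t\in\Omega$, and $F$ is bounded below on $\{x\in\mathcal{X}:z\ge0\}$.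 (A.3) $f,c,b$ are globally Lipschitz continuous in all arguments except $t$. *)

From HB Require Import structures.
From mathcomp Require Import all_boot all_order all_algebra.
From mathcomp Require Import all_classical all_reals all_analysis.
Set Implicit Arguments. Unset Strict Implicit. Unset Printing Implicit Defensive.
Import Order.TTheory GRing.Theory Num.Theory.
Local Open Scope classical_set_scope.
Local Open Scope ring_scope.

Section Defs.
Variable R : realType.

Definition lebR : measure _ _ := (@lebesgue_measure R).

Definition Omega (t0 tE : R) : set R := `]t0, tE[.

Definition vsub n (p q : 'I_n -> R) : 'I_n -> R := fun i => p i - q i.
Definition norm1 n (p : 'I_n -> R) : R := \sum_(i < n) `|p i|.
Definition sqnorm2 n (p : 'I_n -> R) : R := \sum_(i < n) p i ^+ 2.
Definition norm2 n (p : 'I_n -> R) : R := Num.sqrt (sqnorm2 p).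

Definition L2fun (t0 tE : R) (g : R -> R) : Prop :=
  measurable_fun (Omega t0 tE) g /\
  lebR.-integrable (Omega t0 tE) (fun t => (g t ^+ 2)%:E).

(* y in H^1(Omega): y is the (absolutely) continuous representative on
   [t0,tE] with weak derivative yd in L^2(Omega). *)
Definition H1fun (t0 tE : R) (y yd : R -> R) : Prop :=
  L2fun t0 tE yd /\
  forall t, t0 <= t <= tE -> y t = y t0 + Rintegral lebR `[t0, t] yd.

(* an element x = (y, z) of X, together with a representative ydot of dy/dt *)
Record Xel (ny nz : nat) := mkX {
  ys  : 'I_ny -> R -> R;
  yds : 'I_ny -> R -> R;
  zs  : 'I_nz -> R -> R }.

Definition inX (t0 tE : R) ny nz (x : Xel ny nz) : Prop :=
  (forall j, H1fun t0 tE (ys x j) (yds x j)) /\ (forall j, L2fun t0 tE (zs x j)).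

Definition znonneg (t0 tE : R) ny nz (x : Xel ny nz) : Prop :=
  forall j t, Omega t0 tE t -> 0 <= zs x j t.

Definition Xsub ny nz (x1 x2 : Xel ny nz) : Xel ny nz :=
  mkX (fun j t => ys x1 j t - ys x2 j t) (fun j t => yds x1 j t - yds x2 j t)
      (fun j t => zs x1 j t - zs x2 j t).

Definition L2sq (t0 tE : R) (g : R -> R) : R := Rintegral lebR (Omega t0 tE) (fun t => g t ^+ 2).

(* ||x||_X induced by sum_j <y_j,v_j>_{H^1} + sum_j <z_j,w_j>_{L^2} *)
Definition Xnorm (t0 tE : R) ny nz (x : Xel ny nz) : R :=
  Num.sqrt (\sum_(j < ny) (L2sq t0 tE (ys x j) + L2sq t0 tE (yds x j))
            + \sum_(j < nz) L2sq t0 tE (zs x j)).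

Definition L1normz (t0 tE : R) ny nz (x : Xel ny nz) : R :=
  \sum_(j < nz) Rintegral lebR (Omega t0 tE) (fun t => `|zs x j t|).

Definition yv ny nz (x : Xel ny nz) (t : R) : 'I_ny -> R := fun j => ys x j t.
Definition ydv ny nz (x : Xel ny nz) (t : R) : 'I_ny -> R := fun j => yds x j t.
Definition zv ny nz (x : Xel ny nz) (t : R) : 'I_nz -> R := fun j => zs x j t.

Definition Fobj (t0 tE : R) ny nz
  (f : ('I_ny -> R) -> ('I_ny -> R) -> ('I_nz -> R) -> R -> R) (x : Xel ny nz) : R :=
  Rintegral lebR (Omega t0 tE) (fun t => f (ydv x t) (yv x t) (zv x t) t).

Definition rres (t0 tE : R) ny nz nc nb M
  (c : ('I_ny -> R) -> ('I_ny -> R) -> ('I_nz -> R) -> R -> ('I_nc -> R))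
  (b : ('I_M -> ('I_ny -> R)) -> ('I_nb -> R)) (tp : 'I_M -> R)
  (x : Xel ny nz) : R :=
  Rintegral lebR (Omega t0 tE) (fun t => sqnorm2 (c (ydv x t) (yv x t) (zv x t) t))
  + sqnorm2 (b (fun i => yv x (tp i))).

End Defs.

From HB Require Import structures.
From mathcomp Require Import all_boot all_order all_algebra.
From mathcomp Require Import all_classical all_reals all_analysis.
From mathcomp Require Import ring lra measurable_realfun.
Import Order.TTheory GRing.Theory Num.Theory.

(* F and the integral part of r are integrals of functions that are Lipschitz
   in (ydot, y, z) pointwise, so their differences are bounded by the integral
   of the pointwise l1 distance of the arguments.  On the bounded interval
   Omega, Cauchy-Schwarz bounds this integral by sqrt|Omega| times the norm of
   X; when y is fixed it is exactly the L1 distance of the z's.  The squares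
   in r cost only a factor 2C, because |u|^2 - |v|^2 <= (|u|_1 + |v|_1) |u - v|
   and c, b are bounded.  The point values y(t_i) entering b are controlled by
   the H1 norm through |y s| <= |Omega|^-1 int |y| + 2 int |ydot|.  Finally
   |c|_2^2 <= |c|_1^2 makes r bounded, and F is bounded below by (A.2). *)

Set Implicit Arguments. Unset Strict Implicit. Unset Printing Implicit Defensive.
Local Open Scope classical_set_scope.
Local Open Scope ring_scope.

Section Rintegral_estimates.
Context {d : measure_display} {T : measurableType d} {R : realType}.
Context (mu : {measure set T -> \bar R}) {D : set T}.
Hypothesis mD : measurable D.

Local Notation integrable f := (mu.-integrable D (EFin \o f)).

Lemma integrable_sumr I (s : seq I) (h : I -> T -> R) :
  (forall i, integrable (h i)) -> integrable (fun t => \sum_(i <- s) h i t).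
Proof.
move=> hi; apply: (eq_integrable mD (fun t => \sum_(i <- s) (h i t)%:E)).
  by move=> t _; rewrite sumEFin.
by apply: integrable_sum => // i _; exact: hi.
Qed.

Lemma Rintegral_sumr I (s : seq I) (h : I -> T -> R) :
  (forall i, integrable (h i)) ->
  \int[mu]_(t in D) (\sum_(i <- s) h i t) = \sum_(i <- s) \int[mu]_(t in D) h i t.
Proof.
move=> hi; elim: s => [|i s IH].
  under eq_Rintegral do rewrite big_nil.
  by rewrite big_nil Rintegral_cst // mul0r.
under eq_Rintegral do rewrite big_cons.
by rewrite big_cons RintegralD ?IH //; exact: integrable_sumr.
Qed.

Lemma le_normr_RintegralB (h1 h2 g : T -> R) (K : R) :
  integrable h1 -> integrable h2 -> integrable g ->
  (forall t, D t -> `|h1 t - h2 t| <= K * g t) ->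
  `|\int[mu]_(t in D) h1 t - \int[mu]_(t in D) h2 t| <= K * \int[mu]_(t in D) g t.
Proof.
move=> ih1 ih2 ig hK.
have ih12 : integrable (h1 \- h2) by exact: (integrableB mD ih1 ih2).
rewrite -RintegralB // -RintegralZl //.
apply: le_trans (le_normr_Rintegral mD ih12) _.
apply: le_Rintegral => //; last exact: (integrableZl mD K ig).
exact: integrable_norm.
Qed.

Lemma integrableB_sqr (g h : T -> R) :
  measurable_fun D g -> measurable_fun D h ->
  integrable (fun t => g t ^+ 2) -> integrable (fun t => h t ^+ 2) ->
  integrable (fun t => (g t - h t) ^+ 2).
Proof.
move=> mg mh ig ih.
have i2 : integrable (fun t => 2 * g t ^+ 2 + 2 * h t ^+ 2).
  exact: (integrableD mD (integrableZl mD 2 ig) (integrableZl mD 2 ih)).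
apply: (le_integrable mD _ _ i2).
  by apply/measurable_EFinP; apply: measurable_funX; exact: measurable_funB.
move=> t _ /=; rewrite lee_fin !ger0_norm ?sqr_ge0 //; last first.
  by rewrite addr_ge0 // mulr_ge0 // sqr_ge0.
by have := sqr_ge0 (g t + h t); lra.
Qed.

Hypothesis muD_fin : (mu D < +oo)%E.

Lemma integrable_cst_finite (k : R) : integrable (cst k).
Proof.
apply: measurable_bounded_integrable => //; exists `|k|; split; first exact: num_real.
by move=> r kr t _; exact: le_trans (ltW kr).
Qed.

Lemma integrable_of_sqr (g : T -> R) :
  measurable_fun D g -> integrable (fun t => g t ^+ 2) -> integrable g.
Proof.
move=> mg ig.
have i1 : integrable (fun t => g t ^+ 2 + 1).
  exact: (integrableD mD ig (integrable_cst_finite 1)).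
apply: (le_integrable mD _ _ i1); first exact/measurable_EFinP.
move=> t _ /=; rewrite lee_fin [X in _ <= X]ger0_norm ?addr_ge0 ?sqr_ge0 //.
rewrite -[X in _ <= X + _]real_normK ?num_real //.
by have [|/ltW] := leP `|g t| 1; nra.
Qed.

(* Cauchy--Schwarz against the constant 1, via the pointwise AM-GM bound
   [2 m |g| <= g^2 + m^2] at [m] the mean of [|g|]. *)
Lemma Rintegral_normr_le_sqrt (g : T -> R) : 0 < fine (mu D) ->
  measurable_fun D g -> integrable (fun t => g t ^+ 2) ->
  \int[mu]_(t in D) `|g t| <= Num.sqrt (fine (mu D) * \int[mu]_(t in D) g t ^+ 2).
Proof.
move=> muD0 mg ig.
have iabs : integrable (fun t => `|g t|) by exact/integrable_norm/integrable_of_sqr.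
set I := \int[mu]_(t in D) `|g t|; set S := \int[mu]_(t in D) g t ^+ 2.
set V := fine (mu D); set m := I / V.
have I0 : 0 <= I by exact: Rintegral_ge0.
have amgm : 2 * m * I <= S + m ^+ 2 * V.
  rewrite -Rintegral_cst // -RintegralD //; last exact: integrable_cst_finite.
  rewrite -RintegralZl //; apply: le_Rintegral => //.
  - exact: (integrableZl mD _ iabs).
  - exact: (integrableD mD ig (integrable_cst_finite _)).
  - move=> t _; rewrite -[g t ^+ 2](real_normK (num_real _)).
    by have := sqr_ge0 (`|g t| - m); lra.
have IS : I ^+ 2 <= V * S.
  have V0 : 0 < V := muD0.
  have IE : I = m * V by rewrite /m mulfVK // gt_eqF.
  have mVS : m ^+ 2 * V <= S by move: amgm; rewrite IE; nra.
  by rewrite IE; nra.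
have S0 : 0 <= S by apply: Rintegral_ge0 => t _; exact: sqr_ge0.
by rewrite -(ger0_norm I0) -sqrtr_sqr ler_sqrt // mulr_ge0 // ltW.
Qed.

End Rintegral_estimates.

Section vector_norms.
Variables (R : realType) (n : nat).
Implicit Types p q : 'I_n -> R.

Lemma ler_sum_term (F : 'I_n -> R) k : (forall i, 0 <= F i) -> F k <= \sum_(i < n) F i.
Proof. by move=> F0; rewrite (bigD1 k) //= lerDl sumr_ge0. Qed.

Lemma ler_sum_cst (F : 'I_n -> R) c : (forall i, F i <= c) -> \sum_(i < n) F i <= n%:R * c.
Proof.
move=> Fc; apply: le_trans (ler_sum _ (fun i _ => Fc i)) _.
by rewrite sumr_const card_ord mulr_natl.
Qed.

Lemma norm1_ge0 p : 0 <= norm1 p.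
Proof. exact: sumr_ge0. Qed.

Lemma sqnorm2_ge0 p : 0 <= sqnorm2 p.
Proof. by apply: sumr_ge0 => i _; exact: sqr_ge0. Qed.

Lemma normr_le_norm1 p k : `|p k| <= norm1 p.
Proof. exact: ler_sum_term. Qed.

Lemma normr_le_norm2 p k : `|p k| <= norm2 p.
Proof.
rewrite /norm2 -sqrtr_sqr ler_sqrt ?sqnorm2_ge0 //.
by apply: ler_sum_term => i; exact: sqr_ge0.
Qed.

Lemma sqnorm2_le_sqr_norm1 p : sqnorm2 p <= norm1 p ^+ 2.
Proof.
rewrite expr2 {2}/norm1 mulr_sumr; apply: ler_sum => i _.
by rewrite -real_normK ?num_real // expr2 mulrC ler_wpM2r // normr_le_norm1.
Qed.

Lemma norm2_le_norm1 p : norm2 p <= norm1 p.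
Proof.
rewrite /norm2 -[X in _ <= X]ger0_norm ?norm1_ge0 // -sqrtr_sqr ler_sqrt ?sqr_ge0 //.
exact: sqnorm2_le_sqr_norm1.
Qed.

Lemma sqnorm2_le_sqr p C : norm1 p <= C -> sqnorm2 p <= C ^+ 2.
Proof.
move=> pC; apply: le_trans (sqnorm2_le_sqr_norm1 p) _.
by rewrite lerXn2r ?nnegrE ?(le_trans (norm1_ge0 p)) ?norm1_ge0.
Qed.

Lemma normr_sqnorm2B p q :
  `|sqnorm2 p - sqnorm2 q| <= (norm1 p + norm1 q) * norm2 (vsub p q).
Proof.
rewrite /sqnorm2 -sumrB /norm1 -big_split /= mulr_suml.
apply: le_trans (ler_norm_sum _ _ _) _; apply: ler_sum => k _.
rewrite subr_sqr normrM mulrC ler_pM //.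
  exact: ler_normD.
exact: (normr_le_norm2 (vsub p q)).
Qed.

Lemma normr_sqnorm2B_le p q C L s : norm1 p <= C -> norm1 q <= C ->
  norm2 (vsub p q) <= L * s -> 0 <= s ->
  `|sqnorm2 p - sqnorm2 q| <= 2 * `|C| * `|L| * s.
Proof.
move=> pC qC pqL s0; apply: le_trans (normr_sqnorm2B p q) _.
have Cn := ler_norm C; rewrite -mulrA.
apply: ler_pM; rewrite ?addr_ge0 ?norm1_ge0 ?sqrtr_ge0 //; first lra.
by apply: le_trans pqL _; rewrite ler_wpM2r // ler_norm.
Qed.

End vector_norms.

Section Sobolev_on_interval.
Variables (R : realType) (a b : R).
Hypothesis ab : a < b.

Local Notation integrable D f := ((lebR R).-integrable D (EFin \o f)).

(* Typed on the carrier of [lebR], so that it unifies with the domain of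
   [lebR]-integrability statements. *)
Lemma measurable_Omega : measurable (Omega a b : set (measurableTypeR R)).
Proof. exact: measurable_itv. Qed.

Lemma lebR_Omega : lebR R (Omega a b) = (b - a)%:E.
Proof. by have := lebesgue_measure_itv `]a, b[; rewrite /= lte_fin ab -EFinD. Qed.

Lemma Omega_itvcc t : Omega a b t -> a <= t <= b.
Proof. by rewrite /Omega /= in_itv /= => /andP[/ltW -> /ltW ->]. Qed.

Lemma integrable_cst_Omega k : integrable (Omega a b) (cst k).
Proof. by apply: integrable_cst_finite; rewrite ?lebR_Omega ?ltry //; exact: measurable_Omega. Qed.

Lemma L2fun_integrable g : L2fun a b g -> integrable (Omega a b) g.
Proof.
case=> mg ig; apply: integrable_of_sqr => //; first exact: measurable_Omega.
by rewrite lebR_Omega ltry.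
Qed.

Lemma L2fun_sub g h : L2fun a b g -> L2fun a b h -> L2fun a b (fun t => g t - h t).
Proof.
case=> mg ig [mh ih]; split; first exact: measurable_funB.
by apply: integrableB_sqr => //; exact: measurable_Omega.
Qed.

Lemma Rintegral_normr_le_L2sq g : L2fun a b g ->
  Rintegral (lebR R) (Omega a b) (fun t => `|g t|) <= Num.sqrt ((b - a) * L2sq a b g).
Proof.
case=> mg ig; have -> : b - a = fine (lebR R (Omega a b)) by rewrite lebR_Omega.
apply: Rintegral_normr_le_sqrt => //; first exact: measurable_Omega.
  by rewrite lebR_Omega ltry.
by rewrite lebR_Omega /= subr_gt0.
Qed.

Lemma integrable_itvcc g : integrable (Omega a b) g -> integrable `[a, b] g.
Proof.
move=> /integrableP[mg ig]; apply/integrableP; split.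
  by apply/emeasurable_fun_itv_bndo_bndcP; apply/emeasurable_fun_itv_obnd_cbndP.
by rewrite integral_itv_bndoo //; exact: measurableT_comp.
Qed.

Lemma Rintegral_itvcc g : integrable (Omega a b) g ->
  Rintegral (lebR R) `[a, b] g = Rintegral (lebR R) (Omega a b) g.
Proof. by case/integrableP => mg _; rewrite /Rintegral integral_itv_bndoo. Qed.

Lemma H1fun_normrB_le y yd t : H1fun a b y yd -> a <= t <= b ->
  `|y t - y a| <= Rintegral (lebR R) (Omega a b) (fun s => `|yd s|).
Proof.
case=> hyd hy tab; have iyd := L2fun_integrable hyd.
have iabs : integrable `[a, b] (fun s => `|yd s|).
  exact/integrable_itvcc/integrable_norm.
have sub : `[a, t] `<=` `[a, b].
  by apply: subset_itvl; rewrite bnd_simp; case/andP: tab.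
rewrite -Rintegral_itvcc; last exact: integrable_norm.
rewrite hy // addrC addKr.
have iat : integrable `[a, t] yd.
  by apply: integrableS (integrable_itvcc iyd).
apply: le_trans (le_normr_Rintegral _ iat) _ => //.
have := Rintegral_itvB (x := t) iabs; rewrite !bnd_simp; case/andP: tab => ta tb.
move/(_ ta tb) => itvB; rewrite -subr_ge0 itvB.
by apply: Rintegral_ge0 => s _.
Qed.

Lemma H1fun_L2fun y yd : H1fun a b y yd -> L2fun a b y.
Proof.
move=> hH; have [hyd hy] := hH.
have my : measurable_fun `[a, b] y.
  apply: (eq_measurable_fun (fun t => y a + parameterized_integral lebesgue_measure a t yd)).
    by move=> t; rewrite inE /= => tab; rewrite (hy t).
  apply: measurable_funD => //; apply: subspace_continuous_measurable_fun => //.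
  exact: parameterized_integral_continuous (ltW ab) (integrable_itvcc (L2fun_integrable hyd)).
have myO : measurable_fun (Omega a b) y.
  by apply: measurable_funS my => //; exact: subset_itv_oo_cc.
split => //; set K := Rintegral (lebR R) (Omega a b) (fun s => `|yd s|).
suff : integrable (Omega a b) (fun t => y t ^+ 2) by [].
apply: (le_integrable _ _ _ (integrable_cst_Omega ((`|y a| + K) ^+ 2))).
- exact: measurable_Omega.
- exact/measurable_EFinP/measurable_funX.
- move=> t Ot /=; rewrite lee_fin [X in _ <= X]ger0_norm ?sqr_ge0 // normrX.
  have yt : `|y t| <= `|y a| + K.
    have := H1fun_normrB_le hH (Omega_itvcc Ot); rewrite -/K.
    by have := ler_normD (y t - y a) (y a); rewrite subrK; lra.
  by rewrite lerXn2r ?nnegrE // (le_trans _ yt).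
Qed.

Lemma H1fun_sub y1 yd1 y2 yd2 : H1fun a b y1 yd1 -> H1fun a b y2 yd2 ->
  H1fun a b (fun t => y1 t - y2 t) (fun t => yd1 t - yd2 t).
Proof.
case=> hyd1 hy1 [hyd2 hy2]; split; first exact: L2fun_sub.
move=> t tab; have sub : `[a, t] `<=` `[a, b].
  by apply: subset_itvl; rewrite bnd_simp; case/andP: tab.
have [i1 i2] := (integrable_itvcc (L2fun_integrable hyd1), integrable_itvcc (L2fun_integrable hyd2)).
rewrite RintegralB //; [|by apply: integrableS i1 | by apply: integrableS i2].
by rewrite (hy1 t tab) (hy2 t tab); lra.
Qed.

(* Averaging [|y s| <= |y u| + 2 int |yd|] over [u] in [Omega]. *)
Lemma H1fun_normr_le y yd s : H1fun a b y yd -> a <= s <= b ->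
  `|y s| <= (b - a)^-1 * Rintegral (lebR R) (Omega a b) (fun u => `|y u|)
            + 2 * Rintegral (lebR R) (Omega a b) (fun u => `|yd u|).
Proof.
move=> hH sab; set K := Rintegral (lebR R) (Omega a b) (fun u => `|yd u|).
have iy : integrable (Omega a b) (fun u => `|y u|).
  exact/integrable_norm/L2fun_integrable/(H1fun_L2fun hH).
have ba : 0 < b - a by rewrite subr_gt0.
have avg : Rintegral (lebR R) (Omega a b) (fun _ => `|y s|) <=
           Rintegral (lebR R) (Omega a b) (fun u => `|y u| + 2 * K).
  apply: le_Rintegral; [exact: measurable_Omega | exact: integrable_cst_Omega | |].
    by apply: (integrableD _ iy (integrable_cst_Omega _)); exact: measurable_Omega.
  move=> u Ou; have := H1fun_normrB_le hH sab; have := H1fun_normrB_le hH (Omega_itvcc Ou).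
  have := ler_normD (y s - y u) (y u); rewrite subrK.
  by have := ler_distD (y a) (y s) (y u); rewrite -/K (distrC (y a)); lra.
move: avg; rewrite RintegralD //; [|exact: measurable_Omega|exact: integrable_cst_Omega].
rewrite !Rintegral_cst; [|exact: measurable_Omega..].
rewrite lebR_Omega /= => avg.
rewrite -(ler_pM2r ba) mulrDl mulrAC mulVf ?gt_eqF // mul1r; lra.
Qed.

End Sobolev_on_interval.

Section phase_space.
Variables (R : realType) (t0 tE : R) (ny nz : nat).
Hypothesis t0tE : t0 < tE.
Implicit Types x : Xel R ny nz.

Local Notation integrable f := ((lebR R).-integrable (Omega t0 tE) (EFin \o f)).
Local Notation "\int_Omega F" := (Rintegral (lebR R) (Omega t0 tE) F) (at level 36).

Definition Xnorm1_at x t := norm1 (ydv x t) + norm1 (yv x t) + norm1 (zv x t).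

Lemma inX_Xsub x1 x2 : inX t0 tE x1 -> inX t0 tE x2 -> inX t0 tE (Xsub x1 x2).
Proof. by case=> hy1 hz1 [hy2 hz2]; split => j; [exact: H1fun_sub | exact: L2fun_sub]. Qed.

Lemma norm2_vsub_le_Xnorm1_at x1 x2 t :
  norm2 (vsub (ydv x1 t) (ydv x2 t)) + norm2 (vsub (yv x1 t) (yv x2 t))
    + norm2 (vsub (zv x1 t) (zv x2 t)) <= Xnorm1_at (Xsub x1 x2) t.
Proof. by rewrite /Xnorm1_at !lerD ?norm2_le_norm1. Qed.

Lemma L2sq_le_sqr_Xnorm x :
  [/\ forall j, L2sq t0 tE (ys x j) <= Xnorm t0 tE x ^+ 2,
      forall j, L2sq t0 tE (yds x j) <= Xnorm t0 tE x ^+ 2 &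
      forall j, L2sq t0 tE (zs x j) <= Xnorm t0 tE x ^+ 2].
Proof.
have L0 g : 0 <= L2sq t0 tE g by apply: Rintegral_ge0 => t _; exact: sqr_ge0.
rewrite /Xnorm; set Sy := \sum_(j < ny) _; set Sz := \sum_(j < nz) _.
have Sy_ge j : L2sq t0 tE (ys x j) + L2sq t0 tE (yds x j) <= Sy.
  by apply: ler_sum_term => i; rewrite addr_ge0.
have Sz_ge j : L2sq t0 tE (zs x j) <= Sz by exact: ler_sum_term.
have Sy0 : 0 <= Sy by apply: sumr_ge0 => i _; rewrite addr_ge0.
have Sz0 : 0 <= Sz by apply: sumr_ge0.
rewrite sqr_sqrtr ?addr_ge0 //; split=> j.
- by have := Sy_ge j; have := L0 (yds x j); lra.
- by have := Sy_ge j; have := L0 (ys x j); lra.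
- by have := Sz_ge j; lra.
Qed.

Lemma Rintegral_normr_le_Xnorm x g : L2fun t0 tE g -> L2sq t0 tE g <= Xnorm t0 tE x ^+ 2 ->
  \int_Omega (fun t => `|g t|) <= Num.sqrt (tE - t0) * Xnorm t0 tE x.
Proof.
move=> hg gX; apply: le_trans (Rintegral_normr_le_L2sq t0tE hg) _.
rewrite sqrtrM ?subr_ge0 ?(ltW t0tE) // ler_pM2l ?sqrtr_gt0 ?subr_gt0 //.
by rewrite -[X in _ <= X]ger0_norm ?sqrtr_ge0 // -sqrtr_sqr ler_sqrt ?sqr_ge0.
Qed.

Lemma inX_L2fun x : inX t0 tE x ->
  [/\ forall j, L2fun t0 tE (ys x j), forall j, L2fun t0 tE (yds x j) &
      forall j, L2fun t0 tE (zs x j)].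
Proof. by case=> hy hz; split=> // j; [exact: H1fun_L2fun (hy j) | exact: (hy j).1]. Qed.

Lemma integrable_norm1_at x : inX t0 tE x ->
  [/\ integrable (fun t => norm1 (ydv x t)), integrable (fun t => norm1 (yv x t)) &
      integrable (fun t => norm1 (zv x t))].
Proof.
case/inX_L2fun => hy hyd hz; have mO := measurable_Omega t0 tE.
have iabs g : L2fun t0 tE g -> integrable (fun t => `|g t|).
  by move=> hg; exact/integrable_norm/(L2fun_integrable t0tE).
split.
- by apply: (integrable_sumr mO) => j; exact: iabs (hyd j).
- by apply: (integrable_sumr mO) => j; exact: iabs (hy j).
- by apply: (integrable_sumr mO) => j; exact: iabs (hz j).
Qed.

Lemma integrable_Xnorm1_at x : inX t0 tE x -> integrable (Xnorm1_at x).
Proof.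
case/integrable_norm1_at => i1 i2 i3; have mO := measurable_Omega t0 tE.
exact (integrableD mO (integrableD mO i1 i2) i3).
Qed.

Lemma Rintegral_Xnorm1_at x : inX t0 tE x ->
  \int_Omega (Xnorm1_at x) =
    \sum_(j < ny) \int_Omega (fun t => `|yds x j t|)
    + \sum_(j < ny) \int_Omega (fun t => `|ys x j t|)
    + \sum_(j < nz) \int_Omega (fun t => `|zs x j t|).
Proof.
move=> hx; have [i1 i2 i3] := integrable_norm1_at hx.
have [hy hyd hz] := inX_L2fun hx; have mO := measurable_Omega t0 tE.
rewrite /Xnorm1_at RintegralD //; last exact (integrableD mO i1 i2).
rewrite RintegralD // /norm1 /ydv /yv /zv !Rintegral_sumr // => j;
  exact/integrable_norm/(L2fun_integrable t0tE).
Qed.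

Lemma Rintegral_Xnorm1_at_le_Xnorm x : inX t0 tE x ->
  \int_Omega (Xnorm1_at x) <= (ny + ny + nz)%:R * (Num.sqrt (tE - t0) * Xnorm t0 tE x).
Proof.
move=> hx; have [hy hyd hz] := inX_L2fun hx; have [Ly Lyd Lz] := L2sq_le_sqr_Xnorm x.
rewrite Rintegral_Xnorm1_at // !natrD !mulrDl.
by rewrite !lerD // ler_sum_cst // => j; exact: Rintegral_normr_le_Xnorm.
Qed.

Lemma Rintegral_Xnorm1_at_L1normz x : inX t0 tE x ->
  (forall j t, ys x j t = 0) -> (forall j t, yds x j t = 0) ->
  \int_Omega (Xnorm1_at x) = L1normz t0 tE x.
Proof.
move=> hx y0 yd0.
have int0 (g : R -> R) : (forall t, g t = 0) -> \int_Omega (fun t => `|g t|) = 0.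
  move=> g0; under eq_Rintegral do rewrite g0 normr0.
  by rewrite Rintegral_cst ?mul0r //; exact: measurable_Omega.
rewrite Rintegral_Xnorm1_at // (eq_bigr _ (fun j _ => int0 _ (yd0 j))).
by rewrite (eq_bigr _ (fun j _ => int0 _ (y0 j))) !big1_eq !add0r.
Qed.

Lemma norm1_yv_le_Xnorm x s : inX t0 tE x -> t0 <= s <= tE ->
  norm1 (yv x s) <= ny%:R * (((tE - t0)^-1 + 2) * (Num.sqrt (tE - t0) * Xnorm t0 tE x)).
Proof.
move=> hx sab; have [hy hyd _] := inX_L2fun hx; have [Ly Lyd _] := L2sq_le_sqr_Xnorm x.
apply: ler_sum_cst => j; apply: le_trans (H1fun_normr_le t0tE (hx.1 j) sab) _.
rewrite [leRHS]mulrDl; apply: lerD; apply: ler_wpM2l; rewrite ?invr_ge0 ?subr_ge0 ?(ltW t0tE) //;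
  exact: Rintegral_normr_le_Xnorm.
Qed.

End phase_space.

Section objective_and_residual.
Variables (R : realType) (t0 tE : R) (ny nz nc nb M : nat) (tp : 'I_M -> R).
Variables (f : ('I_ny -> R) -> ('I_ny -> R) -> ('I_nz -> R) -> R -> R)
  (c : ('I_ny -> R) -> ('I_ny -> R) -> ('I_nz -> R) -> R -> ('I_nc -> R))
  (b : ('I_M -> ('I_ny -> R)) -> ('I_nb -> R)).
(* The constants of (A.2) and (A.3) are not assumed nonnegative, so the
   estimates below are stated with their absolute values. *)
Variables (Cc Cb Lf Lc Lb : R).
Implicit Types x : Xel R ny nz.

Local Notation integrable f := ((lebR R).-integrable (Omega t0 tE) (EFin \o f)).
Local Notation "\int_Omega F" := (Rintegral (lebR R) (Omega t0 tE) F) (at level 36).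
Local Notation fx x t := (f (ydv x t) (yv x t) (zv x t) t).
Local Notation cx x t := (c (ydv x t) (yv x t) (zv x t) t).
Local Notation bx x := (b (fun i => yv x (tp i))).

Hypothesis t0tE : t0 < tE.
Hypothesis tp_in : forall i, t0 <= tp i <= tE.
Hypothesis f_int : forall x, inX t0 tE x -> integrable (fun t => fx x t).
Hypothesis c_meas : forall x, inX t0 tE x -> forall k,
  measurable_fun (Omega t0 tE) (fun t => cx x t k).
Hypothesis c_bnd : forall x, inX t0 tE x -> znonneg t0 tE x ->
  forall t, Omega t0 tE t -> norm1 (cx x t) <= Cc.
Hypothesis b_bnd : forall x, inX t0 tE x -> znonneg t0 tE x -> norm1 (bx x) <= Cb.
Hypothesis f_lip : forall p q w p' q' w' t, Omega t0 tE t ->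
  `|f p q w t - f p' q' w' t| <= Lf * (norm2 (vsub p p') + norm2 (vsub q q') + norm2 (vsub w w')).
Hypothesis c_lip : forall p q w p' q' w' t, Omega t0 tE t ->
  norm2 (vsub (c p q w t) (c p' q' w' t))
    <= Lc * (norm2 (vsub p p') + norm2 (vsub q q') + norm2 (vsub w w')).
Hypothesis b_lip : forall P P' : 'I_M -> 'I_ny -> R,
  norm2 (vsub (b P) (b P')) <= Lb * \sum_(i < M) norm2 (vsub (P i) (P' i)).

Lemma integrable_sqnorm2_c x : inX t0 tE x -> znonneg t0 tE x ->
  integrable (fun t => sqnorm2 (cx x t)).
Proof.
move=> hx hn; have mO := measurable_Omega t0 tE.
apply: (integrable_sumr mO) => k.
apply: (le_integrable mO _ _ (integrable_cst_Omega t0tE (Cc ^+ 2))).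
  by apply/measurable_EFinP; apply: measurable_funX; exact: c_meas.
move=> t Ot /=; rewrite lee_fin !normrX lerXn2r ?nnegrE //.
exact: le_trans (normr_le_norm1 _ k) (le_trans (c_bnd hx hn Ot) (ler_norm _)).
Qed.

Lemma rres_bounded : exists C, forall x, inX t0 tE x -> znonneg t0 tE x ->
  `|rres t0 tE c b tp x| <= C.
Proof.
exists (Cc ^+ 2 * (tE - t0) + Cb ^+ 2) => x hx hn.
have mO := measurable_Omega t0 tE.
have cC : \int_Omega (fun t => sqnorm2 (cx x t)) <= Cc ^+ 2 * (tE - t0).
  have -> : tE - t0 = fine (lebR R (Omega t0 tE)) by rewrite lebR_Omega.
  rewrite -Rintegral_cst //; apply: le_Rintegral => //.
  - exact: integrable_sqnorm2_c.
  - exact: integrable_cst_Omega.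
  - by move=> t Ot; apply/sqnorm2_le_sqr/c_bnd.
rewrite /rres ger0_norm; first by rewrite lerD // sqnorm2_le_sqr // b_bnd.
by rewrite addr_ge0 ?sqnorm2_ge0 //; apply: Rintegral_ge0 => t _; exact: sqnorm2_ge0.
Qed.

Lemma f_lipschitz_at x1 x2 t : Omega t0 tE t ->
  `|fx x1 t - fx x2 t| <= `|Lf| * Xnorm1_at (Xsub x1 x2) t.
Proof.
move=> Ot; apply: le_trans (f_lip _ _ _ _ _ _ Ot) _.
apply: le_trans (ler_wpM2r _ (ler_norm Lf)) _; first by rewrite !addr_ge0 ?sqrtr_ge0.
by rewrite ler_wpM2l // norm2_vsub_le_Xnorm1_at.
Qed.

Lemma sqnorm2_c_lipschitz_at x1 x2 t :
  inX t0 tE x1 -> inX t0 tE x2 -> znonneg t0 tE x1 -> znonneg t0 tE x2 -> Omega t0 tE t ->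
  `|sqnorm2 (cx x1 t) - sqnorm2 (cx x2 t)| <= 2 * `|Cc| * `|Lc| * Xnorm1_at (Xsub x1 x2) t.
Proof.
move=> h1 h2 n1 n2 Ot.
apply: le_trans (normr_sqnorm2B_le (c_bnd h1 n1 Ot) (c_bnd h2 n2 Ot) (c_lip _ _ _ _ _ _ Ot) _) _.
  by rewrite !addr_ge0 ?sqrtr_ge0.
by rewrite ler_wpM2l ?mulr_ge0 // norm2_vsub_le_Xnorm1_at.
Qed.

Lemma sqnorm2_b_lipschitz x1 x2 :
  inX t0 tE x1 -> inX t0 tE x2 -> znonneg t0 tE x1 -> znonneg t0 tE x2 ->
  `|sqnorm2 (bx x1) - sqnorm2 (bx x2)|
    <= 2 * `|Cb| * `|Lb| * \sum_(i < M) norm1 (yv (Xsub x1 x2) (tp i)).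
Proof.
move=> h1 h2 n1 n2.
apply: le_trans (normr_sqnorm2B_le (b_bnd h1 n1) (b_bnd h2 n2) (b_lip _ _) _) _.
  by apply: sumr_ge0 => i _; exact: sqrtr_ge0.
by rewrite ler_wpM2l ?mulr_ge0 // ler_sum // => i _; exact: norm2_le_norm1.
Qed.

Lemma Fobj_lipschitz_at x1 x2 : inX t0 tE x1 -> inX t0 tE x2 ->
  `|Fobj t0 tE f x1 - Fobj t0 tE f x2| <= `|Lf| * \int_Omega (Xnorm1_at (Xsub x1 x2)).
Proof.
move=> h1 h2; apply: le_normr_RintegralB; [exact: measurable_Omega | exact: f_int ..| |].
  exact: integrable_Xnorm1_at (inX_Xsub t0tE h1 h2).
by move=> t Ot; exact: f_lipschitz_at.
Qed.

Lemma Rintegral_sqnorm2_c_lipschitz x1 x2 :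
  inX t0 tE x1 -> inX t0 tE x2 -> znonneg t0 tE x1 -> znonneg t0 tE x2 ->
  `|\int_Omega (fun t => sqnorm2 (cx x1 t)) - \int_Omega (fun t => sqnorm2 (cx x2 t))|
    <= 2 * `|Cc| * `|Lc| * \int_Omega (Xnorm1_at (Xsub x1 x2)).
Proof.
move=> h1 h2 n1 n2; apply: le_normr_RintegralB; first exact: measurable_Omega.
- exact: integrable_sqnorm2_c.
- exact: integrable_sqnorm2_c.
- exact: integrable_Xnorm1_at (inX_Xsub t0tE h1 h2).
- by move=> t Ot; exact: sqnorm2_c_lipschitz_at.
Qed.

Lemma Fobj_lipschitz_Xnorm : exists L, forall x1 x2, inX t0 tE x1 -> inX t0 tE x2 ->
  `|Fobj t0 tE f x1 - Fobj t0 tE f x2| <= L * Xnorm t0 tE (Xsub x1 x2).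
Proof.
exists (`|Lf| * ((ny + ny + nz)%:R * Num.sqrt (tE - t0))) => x1 x2 h1 h2.
apply: le_trans (Fobj_lipschitz_at h1 h2) _; rewrite -!mulrA ler_wpM2l //.
exact: Rintegral_Xnorm1_at_le_Xnorm (inX_Xsub t0tE h1 h2).
Qed.

Lemma rres_lipschitz_Xnorm : exists L, forall x1 x2, inX t0 tE x1 -> inX t0 tE x2 ->
  znonneg t0 tE x1 -> znonneg t0 tE x2 ->
  `|rres t0 tE c b tp x1 - rres t0 tE c b tp x2| <= L * Xnorm t0 tE (Xsub x1 x2).
Proof.
exists (2 * `|Cc| * `|Lc| * ((ny + ny + nz)%:R * Num.sqrt (tE - t0))
        + 2 * `|Cb| * `|Lb| * (M%:R * (ny%:R * (((tE - t0)^-1 + 2) * Num.sqrt (tE - t0))))).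
move=> x1 x2 h1 h2 n1 n2; have h12 := inX_Xsub t0tE h1 h2.
rewrite /rres opprD addrACA mulrDl; apply: le_trans (ler_normD _ _) (lerD _ _).
  apply: le_trans (Rintegral_sqnorm2_c_lipschitz h1 h2 n1 n2) _.
  rewrite -[_ * Xnorm _ _ _]mulrA ler_wpM2l ?mulr_ge0 // -mulrA.
  exact: Rintegral_Xnorm1_at_le_Xnorm.
apply: le_trans (sqnorm2_b_lipschitz h1 h2 n1 n2) _.
rewrite -[_ * Xnorm _ _ _]mulrA ler_wpM2l ?mulr_ge0 // -!mulrA.
by apply: ler_sum_cst => i; exact: norm1_yv_le_Xnorm.
Qed.

Lemma Fobj_lipschitz_L1normz : exists L, forall x1 x2, inX t0 tE x1 -> inX t0 tE x2 ->
  ys x1 = ys x2 -> yds x1 = yds x2 ->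
  `|Fobj t0 tE f x1 - Fobj t0 tE f x2| <= L * L1normz t0 tE (Xsub x1 x2).
Proof.
exists `|Lf| => x1 x2 h1 h2 ey eyd.
rewrite -(Rintegral_Xnorm1_at_L1normz t0tE (inX_Xsub t0tE h1 h2)); first exact: Fobj_lipschitz_at.
- by move=> j t; rewrite /= ey subrr.
- by move=> j t; rewrite /= eyd subrr.
Qed.

Lemma rres_lipschitz_L1normz : exists L, forall x1 x2, inX t0 tE x1 -> inX t0 tE x2 ->
  znonneg t0 tE x1 -> znonneg t0 tE x2 -> ys x1 = ys x2 -> yds x1 = yds x2 ->
  `|rres t0 tE c b tp x1 - rres t0 tE c b tp x2| <= L * L1normz t0 tE (Xsub x1 x2).
Proof.
exists (2 * `|Cc| * `|Lc|) => x1 x2 h1 h2 n1 n2 ey eyd.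
have eb : bx x1 = bx x2 by rewrite /yv ey.
rewrite /rres eb opprD addrACA subrr addr0.
rewrite -(Rintegral_Xnorm1_at_L1normz t0tE (inX_Xsub t0tE h1 h2)).
- exact: Rintegral_sqnorm2_c_lipschitz.
- by move=> j t; rewrite /= ey subrr.
- by move=> j t; rewrite /= eyd subrr.
Qed.

End objective_and_residual.

Theorem mainTheorem20 (R : realType) (t0 tE : R) (ny nz nc nb M : nat)
  (tp : 'I_M -> R)
  (f : ('I_ny -> R) -> ('I_ny -> R) -> ('I_nz -> R) -> R -> R)
  (c : ('I_ny -> R) -> ('I_ny -> R) -> ('I_nz -> R) -> R -> ('I_nc -> R))
  (b : ('I_M -> ('I_ny -> R)) -> ('I_nb -> R)) :
  t0 < tE ->
  (forall i, t0 <= tp i <= tE) ->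
  (* well-definedness of F and r on X (implicit in the paper) *)
  (forall x : Xel R ny nz, inX t0 tE x ->
     (lebR R).-integrable (Omega t0 tE) (fun t => (f (ydv x t) (yv x t) (zv x t) t)%:E)) ->
  (forall x : Xel R ny nz, inX t0 tE x -> forall k,
     measurable_fun (Omega t0 tE) (fun t => c (ydv x t) (yv x t) (zv x t) t k)) ->
  (* (A.2) *)
  (exists C, forall x : Xel R ny nz, inX t0 tE x -> znonneg t0 tE x ->
     forall t, Omega t0 tE t -> norm1 (c (ydv x t) (yv x t) (zv x t) t) <= C) ->
  (exists C, forall x : Xel R ny nz, inX t0 tE x -> znonneg t0 tE x ->
     norm1 (b (fun i => yv x (tp i))) <= C) ->
  (exists m, forall x : Xel R ny nz, inX t0 tE x -> znonneg t0 tE x ->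
     m <= Fobj t0 tE f x) ->
  (* (A.3) *)
  (exists L, forall p q w p' q' w' t, Omega t0 tE t ->
     `|f p q w t - f p' q' w' t|
       <= L * (norm2 (vsub p p') + norm2 (vsub q q') + norm2 (vsub w w'))) ->
  (exists L, forall p q w p' q' w' t, Omega t0 tE t ->
     norm2 (vsub (c p q w t) (c p' q' w' t))
       <= L * (norm2 (vsub p p') + norm2 (vsub q q') + norm2 (vsub w w'))) ->
  (exists L, forall P P' : 'I_M -> 'I_ny -> R,
     norm2 (vsub (b P) (b P')) <= L * \sum_(i < M) norm2 (vsub (P i) (P' i))) ->
  (* conclusions *)
  (exists m, forall x : Xel R ny nz, inX t0 tE x -> znonneg t0 tE x ->
     m <= Fobj t0 tE f x) /\
  (exists C, forall x : Xel R ny nz, inX t0 tE x -> znonneg t0 tE x ->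
     `|rres t0 tE c b tp x| <= C) /\
  (exists L, forall x1 x2 : Xel R ny nz, inX t0 tE x1 -> inX t0 tE x2 ->
     `|Fobj t0 tE f x1 - Fobj t0 tE f x2| <= L * Xnorm t0 tE (Xsub x1 x2)) /\
  (exists L, forall x1 x2 : Xel R ny nz, inX t0 tE x1 -> inX t0 tE x2 ->
     znonneg t0 tE x1 -> znonneg t0 tE x2 ->
     `|rres t0 tE c b tp x1 - rres t0 tE c b tp x2| <= L * Xnorm t0 tE (Xsub x1 x2)) /\
  (exists L, forall x1 x2 : Xel R ny nz, inX t0 tE x1 -> inX t0 tE x2 ->
     ys x1 = ys x2 -> yds x1 = yds x2 ->
     `|Fobj t0 tE f x1 - Fobj t0 tE f x2| <= L * L1normz t0 tE (Xsub x1 x2)) /\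
  (exists L, forall x1 x2 : Xel R ny nz, inX t0 tE x1 -> inX t0 tE x2 ->
     znonneg t0 tE x1 -> znonneg t0 tE x2 ->
     ys x1 = ys x2 -> yds x1 = yds x2 ->
     `|rres t0 tE c b tp x1 - rres t0 tE c b tp x2| <= L * L1normz t0 tE (Xsub x1 x2)).
Proof.
move=> t0tE tp_in f_int c_meas [Cc c_bnd] [Cb b_bnd] F_low [Lf f_lip] [Lc c_lip] [Lb b_lip].
split; first exact: F_low.
split; first exact: rres_bounded t0tE c_meas c_bnd b_bnd.
split; first exact: Fobj_lipschitz_Xnorm t0tE f_int f_lip.
split; first exact: rres_lipschitz_Xnorm t0tE tp_in c_meas c_bnd b_bnd c_lip b_lip.
split; first exact: Fobj_lipschitz_L1normz t0tE f_int f_lip.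
exact: rres_lipschitz_L1normz _ _ t0tE c_meas c_bnd c_lip.
Qed.
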